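(* Let $\mathbb{X}$ be a basic reverse differential restriction category with countable disjoint joins. Let $b_T,b_F:\Gamma\times U\to 1$ be maps with $\overline{b_T}\,\overline{b_F}$ nowhere defined, and let $m,n,v:\Gamma\times U\to T$ be maps. For any map $h:\Gamma\times U\to X$ write $h':=(\pi_0\times 1_U)h:(\Gamma\times U)\times U\to X$. Then $$\langle\langle 1,\pi_1\rangle,v\rangle R\big[\overline{b_T'}\,m'\vee\overline{b_F'}\,n'\big]\pi_1=\overline{b_T}\,\langle\langle 1,\pi_1\rangle,v\rangle R[m']\pi_1\ \vee\ \overline{b_F}\,\langle\langle 1,\pi_1\rangle,v\rangle R[n']\pi_1,$$ where $\langle 1,\pi_1\rangle:\Gamma\times U\to(\Gamma\times U)\times U$. In SDPL terms: $$[\![\Gamma,x{:}U\vdash v.\mathrm{rd}(x{:}U.\ \texttt{if } b\texttt{ then }m\texttt{ else }n)(x)]\!]=[\![\Gamma,x{:}U\vdash \texttt{if } b\texttt{ then } v.\mathrm{rd}(x{:}U.m)(x)\texttt{ else }v.\mathrm{rd}(x{:}U.n)(x)]\!].$$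
   Context: Composition is written in diagrammatic order: $fg$ means ''first $f$, then $g$''. A restriction category is a category with an operation sending each $f:A\to B$ to a map $\bar f:A\to A$ such that $\bar f f=f$, $\bar f\bar g=\bar g\bar f$ (for $f,g$ with common domain), $\overline{\bar f g}=\bar f\bar g$, and $f\bar g=\overline{fg}\,f$. A map $f$ is total if $\bar f=1$. For parallel maps: - $f\le g$ means $\bar f g=f$; - a nowhere-defined map $\emptyset$ is a least element for $\le$; - $f,g$ are disjoint if $\bar f g$ is nowhere defined; - the join $\bigvee_i f_i$ of a family is its least upper bound for $\le$. ''Countable disjoint joins'' means that every countable family of pairwise disjoint parallel maps has a join, and composition preserves such joins on both sides: $h(\bigvee_i f_i)k=\bigvee_i hf_ik$. The category has restriction products if: - there is an object $1$ with a total map $!_A:A\to 1$ for each $A$ such that every $f:A\to1$ equals $\bar f\,!_A$; - for all $A,B$ there is an object $A\times B$ with total maps $\pi_0,\pi_1$ such that for all $f:C\to A$, $g:C\to B$ there is a unique $\langle f,g\rangle$ with $\langle f,g\rangle\pi_0=\bar g f$ and $\langle f,g\rangle\pi_1=\bar f g$. Write $f\times g=\langle\pi_0f,\pi_1g\rangle$. A Cartesian left additive restriction category is a restriction category with restriction products in which every hom-set is a commutative monoid $(+,0)$ such that: - $\overline{f+g}=\bar f\bar g$ and $\bar 0=1$; - $x(f+g)=xf+xg$ and $x0=\bar x 0$; - $(f+g)\pi_i=f\pi_i+g\pi_i$ and $0\pi_i=0$. Write $\iota_0=\langle 1,0\rangle$ and $\iota_1=\langle 0,1\rangle$. A basic reverse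 differential restriction category is a Cartesian left additive restriction category with an operation sending each $f:A\to B$ to $R[f]:A\times B\to A$ satisfying: - [RD.1] $R[f+g]=R[f]+R[g]$ and $R[0]=0$. - [RD.2] $\langle a,b+c\rangle R[f]=\langle a,b\rangle R[f]+\langle a,c\rangle R[f]$ and $\langle a,0\rangle R[f]=\overline{af}\,0$. - [RD.3] $R[\pi_j]=\pi_1\iota_j$. - [RD.4] $R[\langle f,g\rangle]=(1\times\pi_0)R[f]+(1\times\pi_1)R[g]$. - [RD.5] $R[fg]=\langle\pi_0,\langle\pi_0f,\pi_1\rangle R[g]\rangle R[f]$. - [RD.8] $\overline{R[f]}=\bar f\times 1$. - [RD.9] $R[\bar f]=(\bar f\times1)\pi_1$. Semantics of SDPL used in the second formulation: - A predicate $b$ is interpreted by a pair $(b_T,b_F)$ of maps into $1$ with disjoint restrictions. - $[\![\texttt{if } b\texttt{ then }m\texttt{ else }n]\!]=\overline{b_T}[\![m]\!]\vee\overline{b_F}[\![n]\!]$. - $[\![v.\mathrm{rd}(x.m)(a)]\!]=\langle\langle 1,[\![a]\!]\rangle,[\![v]\!]\rangle R[[\![m]\!]]\pi_1$. - The term $m$ under the rebinding of $x$ in context $(\Gamma\times U)\times U$ is interpreted as $m'$. *)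

(* Composition is diagrammatic:  f ;; g  means "first f, then g". *)

Record Cat := {
  Ob : Type;
  Hom : Ob -> Ob -> Type;
  idm : forall A, Hom A A;
  comp : forall A B C, Hom A B -> Hom B C -> Hom A C;
  comp_id_l : forall A B (f : Hom A B), comp _ _ _ (idm A) f = f;
  comp_id_r : forall A B (f : Hom A B), comp _ _ _ f (idm B) = f;
  comp_assoc : forall A B C D (f : Hom A B) (g : Hom B C) (h : Hom C D),
      comp _ _ _ (comp _ _ _ f g) h = comp _ _ _ f (comp _ _ _ g h)
}.
Arguments Hom {c} A B.
Arguments idm {c} A.
Arguments comp {c A B C} f g.
Notation "f ;; g" := (comp f g) (at level 40, left associativity).

Record RestrCat := {
  rc :> Cat;
  rst : forall (A B : Ob rc), Hom A B -> Hom A A;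
  R1 : forall A B (f : Hom A B), rst _ _ f ;; f = f;
  R2 : forall A B C (f : Hom A B) (g : Hom A C),
      rst _ _ f ;; rst _ _ g = rst _ _ g ;; rst _ _ f;
  R3 : forall A B C (f : Hom A B) (g : Hom A C),
      rst _ _ (rst _ _ f ;; g) = rst _ _ f ;; rst _ _ g;
  R4 : forall A B C (f : Hom A B) (g : Hom B C),
      f ;; rst _ _ g = rst _ _ (f ;; g) ;; f
}.
Arguments rst {r A B} f.

Section RestrDefs.
Context {X : RestrCat}.
Definition total {A B : Ob X} (f : Hom A B) : Prop := rst f = idm A.
Definition rle {A B : Ob X} (f g : Hom A B) : Prop := rst f ;; g = f.
Definition nowhere_defined {A B : Ob X} (f : Hom A B) : Prop :=
  forall g : Hom A B, rle f g.
Definition rdisjoint {A B : Ob X} (f g : Hom A B) : Prop :=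
  nowhere_defined (rst f ;; g).
Definition pairwise_disjoint {A B : Ob X} (f : nat -> Hom A B) : Prop :=
  forall i j, i <> j -> rdisjoint (f i) (f j).
Definition is_join {A B : Ob X} (f : nat -> Hom A B) (j : Hom A B) : Prop :=
  (forall i, rle (f i) j) /\
  (forall g, (forall i, rle (f i) g) -> rle j g).
End RestrDefs.

Record RProdCat := {
  pc :> RestrCat;
  one : Ob pc;
  bang : forall A : Ob pc, Hom A one;
  bang_total : forall A, total (bang A);
  one_term : forall A (f : Hom A one), f = rst f ;; bang A;
  prod : Ob pc -> Ob pc -> Ob pc;
  pi0 : forall A B, Hom (prod A B) A;
  pi1 : forall A B, Hom (prod A B) B;
  pi0_total : forall A B, total (pi0 A B);
  pi1_total : forall A B, total (pi1 A B);
  pair : forall C A B, Hom C A -> Hom C B -> Hom C (prod A B);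
  pair_pi0 : forall C A B (f : Hom C A) (g : Hom C B),
      pair _ _ _ f g ;; pi0 A B = rst g ;; f;
  pair_pi1 : forall C A B (f : Hom C A) (g : Hom C B),
      pair _ _ _ f g ;; pi1 A B = rst f ;; g;
  pair_unique : forall C A B (f : Hom C A) (g : Hom C B) (h : Hom C (prod A B)),
      h ;; pi0 A B = rst g ;; f -> h ;; pi1 A B = rst f ;; g ->
      h = pair _ _ _ f g
}.
Arguments one {r}.
Arguments bang {r} A.
Arguments prod {r} A B.
Arguments pi0 {r A B}.
Arguments pi1 {r A B}.
Arguments pair {r C A B} f g.

Definition fprod {X : RProdCat} {A B A' B' : Ob X} (f : Hom A A') (g : Hom B B')
  : Hom (prod A B) (prod A' B') := pair (pi0 ;; f) (pi1 ;; g).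

Record CLARC := {
  lc :> RProdCat;
  add : forall (A B : Ob lc), Hom A B -> Hom A B -> Hom A B;
  zero : forall (A B : Ob lc), Hom A B;
  add_assoc : forall A B (f g h : Hom A B),
      add _ _ (add _ _ f g) h = add _ _ f (add _ _ g h);
  add_comm : forall A B (f g : Hom A B), add _ _ f g = add _ _ g f;
  add_zero_l : forall A B (f : Hom A B), add _ _ (zero A B) f = f;
  rst_add : forall A B (f g : Hom A B), rst (add _ _ f g) = rst f ;; rst g;
  rst_zero : forall A B, rst (zero A B) = idm A;
  comp_add : forall C A B (x : Hom C A) (f g : Hom A B),
      x ;; add _ _ f g = add _ _ (x ;; f) (x ;; g);
  comp_zero : forall C A B (x : Hom C A), x ;; zero A B = rst x ;; zero C B;
  add_pi0 : forall C A B (f g : Hom C (prod A B)),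
      add _ _ f g ;; pi0 = add _ _ (f ;; pi0) (g ;; pi0);
  add_pi1 : forall C A B (f g : Hom C (prod A B)),
      add _ _ f g ;; pi1 = add _ _ (f ;; pi1) (g ;; pi1);
  zero_pi0 : forall C A B, zero C (prod A B) ;; pi0 = zero C A;
  zero_pi1 : forall C A B, zero C (prod A B) ;; pi1 = zero C B
}.
Arguments add {c A B} f g.
Arguments zero {c} A B.

Record BRDRC := {
  dc :> CLARC;
  RD : forall (A B : Ob dc), Hom A B -> Hom (prod A B) A;
  RD1_add : forall A B (f g : Hom A B), RD _ _ (add f g) = add (RD _ _ f) (RD _ _ g);
  RD1_zero : forall A B, RD _ _ (zero A B) = zero (prod A B) A;
  RD2_add : forall C A B (f : Hom A B) (a : Hom C A) (b c : Hom C B),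
      pair a (add b c) ;; RD _ _ f = add (pair a b ;; RD _ _ f) (pair a c ;; RD _ _ f);
  RD2_zero : forall C A B (f : Hom A B) (a : Hom C A),
      pair a (zero C B) ;; RD _ _ f = rst (a ;; f) ;; zero C A;
  RD3_pi0 : forall A B, RD _ _ (@pi0 _ A B) = pi1 ;; pair (idm A) (zero A B);
  RD3_pi1 : forall A B, RD _ _ (@pi1 _ A B) = pi1 ;; pair (zero B A) (idm B);
  RD4 : forall C A B (f : Hom C A) (g : Hom C B),
      RD _ _ (pair f g) =
      add (fprod (idm C) pi0 ;; RD _ _ f) (fprod (idm C) pi1 ;; RD _ _ g);
  RD5 : forall A B C (f : Hom A B) (g : Hom B C),
      RD _ _ (f ;; g) = pair pi0 (pair (pi0 ;; f) pi1 ;; RD _ _ g) ;; RD _ _ f;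
  RD8 : forall A B (f : Hom A B), rst (RD _ _ f) = fprod (rst f) (idm B);
  RD9 : forall A B (f : Hom A B), RD _ _ (rst f) = fprod (rst f) (idm A) ;; pi1
}.
Arguments RD {_ A B} f.

(* ---------- with countable disjoint joins ----------
   Countable families are indexed by nat (finite ones padded with a
   nowhere-defined map); the empty family's join is a nowhere-defined map. *)
Record BRDRCJ := {
  jc :> BRDRC;
  bot : forall (A B : Ob jc), Hom A B;
  bot_nowhere : forall A B, nowhere_defined (bot A B);
  bot_comp : forall A B C D (h : Hom A B) (k : Hom C D),
      nowhere_defined (h ;; bot B C ;; k);
  join : forall (A B : Ob jc), (nat -> Hom A B) -> Hom A B;
  join_is_join : forall A B (f : nat -> Hom A B),
      pairwise_disjoint f -> is_join f (join _ _ f);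
  join_comp : forall A B C D (h : Hom A B) (f : nat -> Hom B C) (k : Hom C D),
      pairwise_disjoint f ->
      h ;; join _ _ f ;; k = join _ _ (fun i => h ;; f i ;; k)
}.
Arguments bot {_} A B.
Arguments join {_ A B} f.

Definition join2 {X : BRDRCJ} {A B : Ob X} (f g : Hom A B) : Hom A B :=
  join (fun i => match i with 0 => f | 1 => g | _ => bot A B end).

Definition rebind {X : BRDRCJ} {G U Y : Ob X} (h : Hom (prod G U) Y)
  : Hom (prod (prod G U) U) Y := fprod (@pi0 _ G U) (idm U) ;; h.

(* The conditional  if b then m else n  denotes the binary join
   rst b_T ; m  \/  rst b_F ; n  of two disjoint maps, so the theorem is an
   instance of two general facts, valid in any basic reverse differential
   restriction category with countable disjoint joins:
   (1) the reverse derivative preserves disjointness and disjoint joins,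
       R[\/ f_i] = \/ R[f_i]  (RD_join).  This follows from
       R[rst e ; f] = rst (pi0 ; e) ; R[f]  (RD_rst_prefix) and
       R[f] = rst (pi0 ; f) ; R[f]  (RD_idem, a form of RD.8), because every
       member of a join satisfies  f_i = rst f_i ; \/ f_j;
   (2) at the point <<1,pi1>,v>, the reverse derivative of a rebound guarded
       term pulls the guard outside (rd_guard), since <1,pi1> ; (pi0 x 1) = 1.
   The file first collects elementary facts on restrictions, nowhere-defined
   maps, disjointness and joins, then the facts on products and reverse
   derivatives; the theorem follows by distributing R and the evaluation
   over the binary join and applying (2) to each branch. *)

From Stdlib Require Import FunctionalExtensionality Setoid.

Section Restriction.
Context {X : BRDRCJ}.

Lemma rst_idm (A : Ob X) : rst (idm A) = idm A.
Proof. rewrite <- (comp_id_r _ _ _ (rst (idm A))). apply R1. Qed.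

Lemma rst_rst {A B : Ob X} (f : Hom A B) : rst (rst f) = rst f.
Proof.
  rewrite <- (comp_id_r _ _ _ (rst f)) at 1.
  rewrite R3, rst_idm, comp_id_r. reflexivity.
Qed.

Lemma rst_idem {A B : Ob X} (f : Hom A B) : rst f ;; rst f = rst f.
Proof. rewrite <- (rst_rst f) at 1. apply R1. Qed.

Lemma rst_comp_le {A B C : Ob X} (f : Hom A B) (g : Hom B C) :
  rst (f ;; g) ;; rst f = rst (f ;; g).
Proof. rewrite R2, <- R3, <- comp_assoc, R1. reflexivity. Qed.

Lemma rst_comp_rst {A B C : Ob X} (f : Hom A B) (g : Hom B C) :
  rst (f ;; rst g) = rst (f ;; g).
Proof. rewrite R4, R3. apply rst_comp_le. Qed.

Lemma rst_comp_total {A B C : Ob X} (f : Hom A B) (g : Hom B C) :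
  total g -> rst (f ;; g) = rst f.
Proof. intro Hg. rewrite <- rst_comp_rst, Hg, comp_id_r. reflexivity. Qed.

Lemma rle_antisym {A B : Ob X} (f g : Hom A B) : rle f g -> rle g f -> f = g.
Proof.
  unfold rle; intros Hfg Hgf.
  assert (Ef : rst f = rst f ;; rst g) by (rewrite <- R3, Hfg; reflexivity).
  assert (Eg : rst g = rst g ;; rst f) by (rewrite <- R3, Hgf; reflexivity).
  assert (E : rst f = rst g) by (rewrite Ef, R2, <- Eg; reflexivity).
  rewrite <- Hfg, E. apply R1.
Qed.

Lemma nowhere_bot {A B : Ob X} (k : Hom A B) : nowhere_defined k -> k = bot A B.
Proof. intro Hk. apply rle_antisym; [apply Hk | apply bot_nowhere]. Qed.

Lemma nowhere_compl {A B C : Ob X} (h : Hom A B) (k : Hom B C) :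
  nowhere_defined k -> nowhere_defined (h ;; k).
Proof.
  intro Hk. rewrite (nowhere_bot k Hk), <- (comp_id_r _ _ _ (h ;; _)).
  apply bot_comp.
Qed.

Lemma nowhere_compr {A B C : Ob X} (k : Hom A B) (l : Hom B C) :
  nowhere_defined k -> nowhere_defined (k ;; l).
Proof.
  intro Hk. rewrite (nowhere_bot k Hk), <- (comp_id_l _ _ _ (bot A B)).
  apply bot_comp.
Qed.

(* The restriction of a nowhere-defined map is nowhere defined; the total
   map [zero] back to the domain transports the property. *)
Lemma nowhere_rst {A B : Ob X} (k : Hom A B) :
  nowhere_defined k -> nowhere_defined (rst k).
Proof.
  intro Hk.
  assert (Hz : nowhere_defined (k ;; zero B A)) by (apply nowhere_compr, Hk).
  assert (E : rst (k ;; zero B A) = k ;; zero B A).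
  { pose proof (Hz (rst (k ;; zero B A))) as Hk'. unfold rle in Hk'.
    rewrite rst_idem in Hk'. exact Hk'. }
  rewrite <- (rst_comp_total k (zero B A) (rst_zero _ B A)), E. exact Hz.
Qed.

Lemma rdisjoint_of_rsts {A B : Ob X} (f g : Hom A B) :
  nowhere_defined (rst f ;; rst g) -> rdisjoint f g.
Proof.
  intro Hfg. unfold rdisjoint. rewrite <- (R1 _ _ _ g), <- comp_assoc.
  apply nowhere_compr, Hfg.
Qed.

(* Disjointness is symmetric, since restriction idempotents commute. *)
Lemma rdisjoint_sym {A B : Ob X} (f g : Hom A B) : rdisjoint f g -> rdisjoint g f.
Proof.
  unfold rdisjoint. intro Hfg. apply rdisjoint_of_rsts.
  rewrite R2, <- R3. apply nowhere_rst, Hfg.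
Qed.

Lemma rdisjoint_precomp {A' A B : Ob X} (h : Hom A' A) (f g : Hom A B) :
  rdisjoint f g -> rdisjoint (h ;; f) (h ;; g).
Proof.
  unfold rdisjoint. intro Hfg.
  rewrite <- comp_assoc, <- R4, comp_assoc. apply nowhere_compl, Hfg.
Qed.

Lemma rdisjoint_postcomp {A B B' : Ob X} (f g : Hom A B) (k : Hom B B') :
  rdisjoint f g -> rdisjoint (f ;; k) (g ;; k).
Proof.
  unfold rdisjoint. intro Hfg.
  rewrite <- comp_assoc, <- rst_comp_le, (comp_assoc _ _ _ _ _ (rst (f ;; k))).
  apply nowhere_compr, nowhere_compl, Hfg.
Qed.

Lemma rdisjoint_comp {A' A B B' : Ob X} (h : Hom A' A) (f g : Hom A B) (k : Hom B B') :
  rdisjoint f g -> rdisjoint (h ;; f ;; k) (h ;; g ;; k).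
Proof. intro Hfg. apply rdisjoint_postcomp, rdisjoint_precomp, Hfg. Qed.

Lemma rdisjoint_guarded {A B C : Ob X} (a b : Hom A B) (x y : Hom A C) :
  rdisjoint a b -> rdisjoint (rst a ;; x) (rst b ;; y).
Proof.
  unfold rdisjoint. intro Hab.
  replace (rst (rst a ;; x) ;; (rst b ;; y)) with (rst x ;; (rst a ;; rst b) ;; y).
  - apply nowhere_compr, nowhere_compl. rewrite <- R3. apply nowhere_rst, Hab.
  - rewrite R3, <- (comp_assoc _ _ _ _ _ (rst a ;; rst x)), (R2 _ _ _ _ a x),
      !comp_assoc.
    reflexivity.
Qed.

Lemma pairwise_disjoint_comp {A' A B B' : Ob X} (h : Hom A' A) (f : nat -> Hom A B)
  (k : Hom B B') :
  pairwise_disjoint f -> pairwise_disjoint (fun i => h ;; f i ;; k).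
Proof. intros Hd i j Hij. apply rdisjoint_comp, Hd, Hij. Qed.

Lemma pairwise_disjoint_rst {A B : Ob X} (f : nat -> Hom A B) :
  pairwise_disjoint f -> pairwise_disjoint (fun i => rst (f i)).
Proof.
  intros Hd i j Hij. apply rdisjoint_of_rsts. rewrite rst_rst, rst_rst, <- R3.
  apply nowhere_rst, Hd, Hij.
Qed.

Lemma join_ext {A B : Ob X} (f g : nat -> Hom A B) :
  (forall i, f i = g i) -> join f = join g.
Proof. intro Hfg. f_equal. apply functional_extensionality, Hfg. Qed.

Lemma join_member {A B : Ob X} (f : nat -> Hom A B) (i : nat) :
  pairwise_disjoint f -> rst (f i) ;; join f = f i.
Proof. intro Hd. apply (proj1 (join_is_join _ _ _ f Hd)). Qed.

Lemma rst_join {A B : Ob X} (f : nat -> Hom A B) :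
  pairwise_disjoint f -> rst (join f) = join (fun i => rst (f i)).
Proof.
  intro Hd. pose proof (pairwise_disjoint_rst f Hd) as Hd'.
  set (j := join f). set (e := join (fun i => rst (f i))).
  assert (He : rle e (rst j)).
  { apply (proj2 (join_is_join _ _ _ _ Hd')). intro i. unfold rle, j.
    rewrite rst_rst, <- R3, (join_member f i Hd). reflexivity. }
  assert (Hej : e ;; j = j).
  { unfold e. rewrite <- (comp_id_l _ _ _ (join _)), join_comp by exact Hd'.
    unfold j. apply join_ext. intro i. rewrite comp_id_l. apply join_member, Hd. }
  unfold rle in He. rewrite <- Hej, <- He, comp_assoc, R1, R3, He. reflexivity.
Qed.

Definition join2_family {A B : Ob X} (f g : Hom A B) : nat -> Hom A B :=
  fun i => match i with 0 => f | 1 => g | _ => bot A B end.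

Lemma join2_family_disjoint {A B : Ob X} (f g : Hom A B) :
  rdisjoint f g -> pairwise_disjoint (join2_family f g).
Proof.
  intros Hfg [|[|i]] [|[|j]] Hij; simpl; try congruence;
    try (apply rdisjoint_sym; exact Hfg); try exact Hfg;
    unfold rdisjoint;
    first [ apply nowhere_compl, bot_nowhere
          | apply nowhere_compr, nowhere_rst, bot_nowhere ].
Qed.

Lemma join_join2_family {A B C D : Ob X} (F : Hom A B -> Hom C D) (f g : Hom A B) :
  (forall k, nowhere_defined k -> nowhere_defined (F k)) ->
  join (fun i => F (join2_family f g i)) = join2 (F f) (F g).
Proof.
  intro HF. apply join_ext. intros [|[|i]]; try reflexivity.
  apply nowhere_bot, HF, bot_nowhere.
Qed.

Lemma join2_comp {A' A B B' : Ob X} (h : Hom A' A) (f g : Hom A B) (k : Hom B B') :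
  rdisjoint f g -> h ;; join2 f g ;; k = join2 (h ;; f ;; k) (h ;; g ;; k).
Proof.
  intro Hfg.
  change (h ;; join (join2_family f g) ;; k = join2 (h ;; f ;; k) (h ;; g ;; k)).
  rewrite join_comp by (apply join2_family_disjoint, Hfg).
  apply (join_join2_family (fun x => h ;; x ;; k)).
  intros x Hx. apply nowhere_compr, nowhere_compl, Hx.
Qed.

End Restriction.

Section ReverseDerivative.
Context {X : BRDRCJ}.

Lemma comp_pair {C' C A B : Ob X} (x : Hom C' C) (a : Hom C A) (b : Hom C B) :
  x ;; pair a b = pair (x ;; a) (x ;; b).
Proof.
  apply pair_unique;
    rewrite comp_assoc, ?pair_pi0, ?pair_pi1, <- comp_assoc, R4, comp_assoc;
    reflexivity.
Qed.

Lemma pair_proj (A B : Ob X) : pair (@pi0 X A B) pi1 = idm (prod A B).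
Proof.
  symmetry. apply pair_unique; rewrite comp_id_l.
  - rewrite (pi1_total X A B), comp_id_l. reflexivity.
  - rewrite (pi0_total X A B), comp_id_l. reflexivity.
Qed.

Lemma rst_pair {C A B : Ob X} (a : Hom C A) (b : Hom C B) :
  rst (pair a b) = rst a ;; rst b.
Proof. rewrite <- (rst_comp_total _ _ (pi1_total X A B)), pair_pi1. apply R3. Qed.

Lemma fprod_rst {A B C : Ob X} (e : Hom A C) :
  fprod (rst e) (idm B) = rst (@pi0 X A B ;; e).
Proof.
  unfold fprod. symmetry. apply pair_unique; rewrite !comp_id_r.
  - rewrite <- R4, (pi1_total X A B), comp_id_l. reflexivity.
  - rewrite rst_comp_rst. reflexivity.
Qed.

(* [RD.8] in the form: R[f] is defined only where f is. *)
Lemma RD_idem {A B : Ob X} (f : Hom A B) : rst (@pi0 X A B ;; f) ;; RD f = RD f.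
Proof. rewrite <- fprod_rst, <- RD8. apply R1. Qed.

Lemma RD_rst_prefix {A B C : Ob X} (e : Hom A C) (f : Hom A B) :
  RD (rst e ;; f) = rst (@pi0 X A B ;; e) ;; RD f.
Proof.
  assert (Hguard : pair (pi0 ;; rst e) (@pi1 X A B) = rst (pi0 ;; e)).
  { rewrite <- fprod_rst. unfold fprod. rewrite comp_id_r. reflexivity. }
  rewrite RD5, RD9, fprod_rst, Hguard.
  rewrite <- comp_assoc, R4, comp_assoc, pair_pi1, (pi0_total X A B), comp_id_l.
  rewrite <- (comp_assoc _ _ _ _ _ (pair _ _) pi0 e), pair_pi0, comp_assoc, R3.
  rewrite comp_assoc, <- (comp_assoc _ _ _ _ _ (rst (pi0 ;; e)) (rst (pi0 ;; e))),
    rst_idem.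
  apply R1.
Qed.

Lemma nowhere_RD {A B : Ob X} (f : Hom A B) :
  nowhere_defined f -> nowhere_defined (RD f).
Proof.
  intro Hf. rewrite <- RD_idem. apply nowhere_compr, nowhere_rst, nowhere_compl, Hf.
Qed.

Lemma RD_disjoint {A B : Ob X} (f g : Hom A B) :
  rdisjoint f g -> rdisjoint (RD f) (RD g).
Proof.
  intro Hfg. rewrite <- (RD_idem f), <- (RD_idem g).
  apply rdisjoint_guarded, rdisjoint_precomp, Hfg.
Qed.

Lemma RD_join {A B : Ob X} (f : nat -> Hom A B) :
  pairwise_disjoint f -> RD (join f) = join (fun i => RD (f i)).
Proof.
  intro Hd.
  pose proof (pairwise_disjoint_comp (@pi0 X A B) f (idm B) Hd) as Hd0.
  pose proof (pairwise_disjoint_rst _ Hd0) as Hguards.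
  assert (Hdom : rst (@pi0 X A B ;; join f)
                 = join (fun i => rst (pi0 ;; f i ;; idm B))).
  { rewrite <- (rst_join _ Hd0), <- (join_comp _ _ _ _ _ (@pi0 X A B) f (idm B) Hd),
      comp_id_r.
    reflexivity. }
  rewrite <- (RD_idem (join f)), Hdom, <- (comp_id_l _ _ _ (join _)), join_comp
    by exact Hguards.
  apply join_ext. intro i.
  rewrite comp_id_l, comp_id_r, <- RD_rst_prefix, join_member by exact Hd.
  reflexivity.
Qed.

Lemma RD_join2 {A B : Ob X} (f g : Hom A B) :
  rdisjoint f g -> RD (join2 f g) = join2 (RD f) (RD g).
Proof.
  intro Hfg. change (RD (join (join2_family f g)) = join2 (RD f) (RD g)).
  rewrite RD_join by (apply join2_family_disjoint, Hfg).
  apply (join_join2_family RD), nowhere_RD.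
Qed.

(* Duplicating the U-component and then forgetting the old one is the identity:
   <1,pi1> ; (pi0 x 1) = 1, so rebinding is undone at the point <1,pi1>. *)
Lemma copy_then_rebind (G U : Ob X) :
  pair (idm (prod G U)) pi1 ;; fprod (@pi0 X G U) (idm U) = idm (prod G U).
Proof.
  unfold fprod. rewrite comp_pair, <- !comp_assoc, pair_pi0, pair_pi1.
  rewrite (pi1_total X G U), rst_idm, !comp_id_l, comp_id_r. apply pair_proj.
Qed.

Lemma rd_guard {G U Z T : Ob X} (e : Hom (prod G U) Z) (v : Hom (prod G U) T)
  (h : Hom (prod (prod G U) U) T) :
  pair (pair (idm (prod G U)) pi1) v ;; RD (rst (rebind e) ;; h)
  = rst e ;; pair (pair (idm (prod G U)) pi1) v ;; RD h.
Proof.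
  set (P := pair (pair (idm (prod G U)) pi1) v).
  assert (HP : P ;; (pi0 ;; rebind e) = rst v ;; e).
  { unfold P, rebind. rewrite <- comp_assoc, pair_pi0, !comp_assoc,
      <- (comp_assoc _ _ _ _ _ (pair _ _) (fprod _ _)), copy_then_rebind, comp_id_l.
    reflexivity. }
  assert (HrstP : rst v ;; P = P).
  { unfold P. rewrite <- (R1 _ _ _ (pair (pair (idm (prod G U)) pi1) v)) at 2.
    rewrite !rst_pair, rst_idm, (pi1_total X G U), !comp_id_l. reflexivity. }
  rewrite RD_rst_prefix, <- comp_assoc, R4, HP, R3, R2,
    (comp_assoc _ _ _ _ _ (rst e) (rst v) P), HrstP.
  reflexivity.
Qed.

End ReverseDerivative.

Theorem mainTheorem4 (X : BRDRCJ) (G U T : Ob X)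
  (bT bF : Hom (prod G U) one)
  (hdisj : nowhere_defined (rst bT ;; rst bF))
  (m n v : Hom (prod G U) T) :
  pair (pair (idm (prod G U)) pi1) v
    ;; RD (join2 (rst (rebind bT) ;; rebind m) (rst (rebind bF) ;; rebind n))
    ;; pi1
  = join2 (rst bT ;; pair (pair (idm (prod G U)) pi1) v ;; RD (rebind m) ;; pi1)
          (rst bF ;; pair (pair (idm (prod G U)) pi1) v ;; RD (rebind n) ;; pi1).
Proof.
  assert (Hbranches : rdisjoint (rst (rebind bT) ;; rebind m)
                                (rst (rebind bF) ;; rebind n)).
  { apply rdisjoint_guarded, rdisjoint_precomp, rdisjoint_of_rsts, hdisj. }
  rewrite RD_join2 by exact Hbranches.
  rewrite join2_comp by (apply RD_disjoint, Hbranches).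
  rewrite !rd_guard. reflexivity.
Qed.
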